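(* In the online ADDIS setting of the context, assume the null $p$-values are conditionally uniformly conservative, that $\tau_j>\lambda_j\ge\alpha_j$ for all $j$, and that there is $\epsilon>0$ with $\tau_j-\lambda_j>\epsilon$ for all $j$. Let $T_{\mathrm{stop}}$ be a stopping time with respect to $(\mathcal F^t)_{t\ge0}$ with $\mathbb E[T_{\mathrm{stop}}]<\infty$. Then any procedure that maintains $\widehat{\mathrm{FDP}}_{\mathrm{ADDIS}}(t)\le\alpha$ for all $t\in\mathbb N$ satisfies $\mathrm{mFDR}(T_{\mathrm{stop}})=\frac{\mathbb E[|\mathcal H_0\cap R(T_{\mathrm{stop}})|]}{\mathbb E[|R(T_{\mathrm{stop}})|\vee1]}\le\alpha$.
   Context: Let $P_1,P_2,\dots$ be $p$-values for hypotheses $H_1,H_2,\dots$, and let $\mathcal H_0\subseteq\mathbb N$ be the set of indices of true nulls. Fix $\alpha\in(0,1)$. Sequences $\{\alpha_j\},\{\lambda_j\},\{\tau_j\}$ in $[0,1]$ define $S_j=\mathbf 1\{P_j\le\tau_j\}$, $C_j=\mathbf 1\{P_j\le\lambda_j\}$, $R_j=\mathbf 1\{P_j\le\alpha_j\}$, $R(t)=\{j\le t:R_j=1\}$; $\mathcal F^t=\sigma(R_{1:t},C_{1:t},S_{1:t})$, $\mathcal F^0$ trivial; $\alpha_t,\lambda_t,\tau_t$ are $\mathcal F^{t-1}$-measurable. Null $p$-values are conditionally uniformly conservative if for every $t\in\mathcal H_0$ and all $x,\tau\in(0,1)$, $\Pr(P_t/\tau\le x\mid P_t\le\tau,\mathcal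 F^{t-1})\le x$. $\widehat{\mathrm{FDP}}_{\mathrm{ADDIS}}(t)=\big(\sum_{j\le t}\alpha_j\frac{\mathbf 1\{\lambda_j<P_j\le\tau_j\}}{\tau_j-\lambda_j}\big)/(|R(t)|\vee1)$. *)

From HB Require Import structures.
From mathcomp Require Import all_boot all_order all_algebra.
From mathcomp Require Import all_classical all_reals all_analysis.
Set Implicit Arguments. Unset Strict Implicit. Unset Printing Implicit Defensive.
Import Order.TTheory GRing.Theory Num.Theory.
Local Open Scope classical_set_scope.
Local Open Scope ring_scope.

Section ADDIS.
Context {d : measure_display} {T : measurableType d} {R : realType}.
Variables (p alpha lambda tau : nat -> T -> R).
(* Hypotheses are indexed by j = 1, 2, ...; index 0 is unused. *)

Definition Rev (j : nat) : set T := [set w | p j w <= alpha j w].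
Definition Cev (j : nat) : set T := [set w | p j w <= lambda j w].
Definition Sev (j : nat) : set T := [set w | p j w <= tau j w].

Definition filt_gen (t : nat) : set (set T) :=
  [set A | exists j, (1 <= j <= t)%N /\ (A = Rev j \/ A = Cev j \/ A = Sev j)].

(* F^t; F^0 is the trivial sigma-algebra {set0, setT} *)
Definition filt (t : nat) : set (set T) := <<s filt_gen t>>.

Definition filt_measurable (t : nat) (f : T -> R) : Prop :=
  forall B : set R, measurable B -> filt t (f @^-1` B).

Definition nrej (t : nat) (w : T) : nat :=
  (\sum_(1 <= j < t.+1) nat_of_bool (p j w <= alpha j w)%R)%N.

Definition nfalse_rej (H0 : pred nat) (t : nat) (w : T) : nat :=
  (\sum_(1 <= j < t.+1 | H0 j) nat_of_bool (p j w <= alpha j w)%R)%N.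

Definition FDP_ADDIS (t : nat) (w : T) : R :=
  (\sum_(1 <= j < t.+1)
      alpha j w * ((lambda j w < p j w) && (p j w <= tau j w))%:R
        / (tau j w - lambda j w))
  / Num.max (nrej t w)%:R 1.

End ADDIS.

Section Cond.
Context {d : measure_display} {T : measurableType d} {R : realType}.

(* Conditional uniform conservativeness of the null p-values:
   Pr(P_t / tau <= x | P_t <= tau, F^{t-1}) <= x  a.s., for t in H0 and
   x, tau in (0,1).  Conditional probabilities given the sigma-algebra
   F^{t-1} are expressed through their defining integral property:
   for every B in F^{t-1},
     P({P_t <= x tau} ∩ B) <= x * P({P_t <= tau} ∩ B). *)
Definition cond_unif_conservative (P : probability T R)
    (p alpha lambda tau : nat -> T -> R) (H0 : pred nat) : Prop :=
  forall t : nat, (1 <= t)%N -> H0 t ->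
  forall x tau0 : R, 0 < x < 1 -> 0 < tau0 < 1 ->
  forall B : set T, filt p alpha lambda tau t.-1 B ->
    (P ([set w | (p t w / tau0 <= x)%R] `&` ([set w | (p t w <= tau0)%R] `&` B))
      <= x%:E * P ([set w | (p t w <= tau0)%R] `&` B))%E.

Definition stopping_time (p alpha lambda tau : nat -> T -> R)
    (Ts : T -> nat) : Prop :=
  forall n : nat, filt p alpha lambda tau n [set w | Ts w = n].

End Cond.

From HB Require Import structures.
From mathcomp Require Import all_boot all_order all_algebra.
From mathcomp Require Import all_classical all_reals all_analysis.
From mathcomp Require Import ring lra.
Import Order.TTheory GRing.Theory Num.Theory.
Import measurable_realfun.
Set Implicit Arguments. Unset Strict Implicit. Unset Printing Implicit Defensive.
Local Open Scope classical_set_scope.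
Local Open Scope ring_scope.

(* For j in H0 the event B_j = {j <= T} lies in F^{j-1} because T is a stopping
   time.  F^{j-1} is generated by finitely many events, hence by a finite
   partition into atoms, and alpha_j = a <= lambda_j = l < tau_j = t are constant
   on each atom.  Conditional uniform conservativeness, used at the levels a/t
   and l/t of P_j/t, gives for every F^{j-1}-event D
     P(P_j <= a, D) (t - l) <= a P(l < P_j <= t, D),
   hence E[1_{B_j} R_j] <= E[1_{B_j} alpha_j 1{lambda_j < P_j <= tau_j} / (tau_j - lambda_j)].
   Summing over j, the left-hand sides add up to E|H0 ∩ R(T)| and the right-hand
   sides to the expectation of the numerator of FDP_ADDIS(T), which is at most
   the target level times E[|R(T)| ∨ 1]. *)

Lemma measurable_ler d (T : measurableType d) (R : realType) (f g : T -> R) :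
  measurable_fun setT f -> measurable_fun setT g -> measurable [set w | f w <= g w].
Proof.
move=> mf mg; rewrite -[X in measurable X]setTI.
exact: (measurable_fun_ler mf mg measurableT (Y := [set true]) I).
Qed.

Lemma measurable_ltr d (T : measurableType d) (R : realType) (f g : T -> R) :
  measurable_fun setT f -> measurable_fun setT g -> measurable [set w | f w < g w].
Proof.
move=> mf mg; rewrite -[X in measurable X]setTI.
exact: (measurable_fun_ltr mf mg measurableT (Y := [set true]) I).
Qed.

Lemma measurable_ltr_ler d (T : measurableType d) (R : realType) (f g h : T -> R) :
  measurable_fun setT f -> measurable_fun setT g -> measurable_fun setT h ->
  measurable [set w | f w < g w <= h w].
Proof.
move=> mf mg mh.
rewrite (_ : [set w | _] = [set w | f w < g w] `&` [set w | g w <= h w]).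
  by apply: measurableI; [exact: measurable_ltr|exact: measurable_ler].
by apply/seteqP; split => w /=; [move/andP|move=> [-> ->]].
Qed.

Lemma measurable_sum_from1 d (T : measurableType d) (R : realType)
    (f : nat -> T -> R) n :
  (forall j, (1 <= j)%N -> measurable_fun setT (f j)) ->
  measurable_fun setT (fun w => \sum_(1 <= j < n.+1) f j w).
Proof.
move=> mf; rewrite (_ : (fun w => _) = fun w => \sum_(0 <= j < n) f j.+1 w).
  by apply: measurable_sum => j; exact: mf.
by apply/funext => w; rewrite big_add1.
Qed.

Lemma measurable_fun_stopped d (T : measurableType d) d' (U : measurableType d')
    (Ts : T -> nat) (F : nat -> T -> U) :
  (forall n, measurable [set w | Ts w = n]) -> (forall n, measurable_fun setT (F n)) ->
  measurable_fun setT (fun w => F (Ts w) w).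
Proof.
move=> mT mF _ Y mY; rewrite setTI.
rewrite (_ : _ @^-1` Y = \bigcup_n ([set w | Ts w = n] `&` (F n @^-1` Y))).
  apply: bigcupT_measurable => n; apply: measurableI => //.
  by rewrite -[_ @^-1` _]setTI; exact: mF.
apply/seteqP; split => w /=; first by exists (Ts w).
by move=> [n _ [/= <-]].
Qed.

Lemma indic_bool (T : Type) (R : pzRingType) (b : T -> bool) w :
  \1_[set x | b x] w = (b w)%:R :> R.
Proof.
rewrite indicE; have [bw|nbw] := boolP (b w); first by rewrite mem_set.
by rewrite memNset // => bw; rewrite bw in nbw.
Qed.

Lemma ge0_integral_fibers d (T : measurableType d) (R : realType) (mu : measure T R)
    (I : finType) (h : T -> I) (f : T -> \bar R) :
  (forall i, measurable (h @^-1` [set i])) -> measurable_fun setT f ->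
  (forall w, 0 <= f w)%E ->
  (\int[mu]_w f w = \sum_(i : I) \int[mu]_w (f w * (\1_(h @^-1` [set i]) w)%:E))%E.
Proof.
move=> mh mf f0; rewrite -ge0_integral_sum //; first last.
- by move=> i w _; apply: mule_ge0 => //; rewrite lee_fin.
- move=> i; apply: emeasurable_funM => //.
  by apply/measurable_EFinP; exact: measurable_indic.
apply: eq_integral => w _; rewrite (bigD1 (h w)) //= big1 ?adde0.
  by rewrite indicE mem_set // mule1.
by move=> i hi; rewrite indicE memNset ?mule0 // => /= e; move: hi; rewrite e eqxx.
Qed.

Lemma nneseries_sum_finite (R : realType) (f : nat -> \bar R) N :
  (forall k, (0 <= f k)%E) -> (forall k, (N <= k)%N -> f k = 0%E) ->
  (\sum_(k <oo) f k = \sum_(0 <= k < N) f k)%E.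
Proof.
move=> f0 fN; rewrite (nneseries_split 0 N) // add0n eseries0 ?adde0 //.
by move=> i hi _; exact: fN.
Qed.

Lemma ler_mul_of_forall_gt (R : realFieldType) (x u v : R) : x < 1 -> 0 <= v ->
  (forall y, x < y < 1 -> u <= y * v) -> u <= x * v.
Proof.
move=> x1 v0 H; rewrite leNgt; apply/negP => xvu.
have v_gt0 : 0 < v.
  rewrite lt_def v0 andbT; apply: contraTneq xvu => v_eq0.
  have := H ((x + 1) / 2); rewrite v_eq0 !mulr0 -leNgt; apply; apply/andP; split; lra.
pose z := Num.min (u / v) 1.
have xz : x < z by rewrite lt_min x1 andbT ltr_pdivlMr.
have z1 : z <= 1 by rewrite ge_min lexx orbT.
have zu : z * v <= u by rewrite -ler_pdivlMr // ge_min lexx.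
have /H : x < (x + z) / 2 < 1 by apply/andP; split; lra.
have : (x + z) / 2 * v < z * v by rewrite ltr_pM2r //; lra.
lra.
Qed.

(** * The filtration F^t and its atoms *)

Section Filtration.
Context {d : measure_display} {T : measurableType d} {R : realType}.
Variables (p alpha lambda tau : nat -> T -> R).

Local Notation filt := (filt p alpha lambda tau).
Local Notation Ft t := (g_sigma_algebraType (filt_gen p alpha lambda tau t)).

Lemma filt_sub t t' : (t <= t')%N -> filt t `<=` filt t'.
Proof.
move=> tt'; apply: sub_smallest2r => // A [j [/andP[j1 jt] HA]].
by exists j; rewrite j1 (leq_trans jt tt').
Qed.

Lemma filtI t A B : filt t A -> filt t B -> filt t (A `&` B).
Proof. exact: (@measurableI _ (Ft t)). Qed.

Lemma filtC t A : filt t A -> filt t (~` A).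
Proof. exact: (@measurableC _ (Ft t)). Qed.

Lemma filt_bigcup t (I : set nat) (F : nat -> set T) :
  (forall n, I n -> filt t (F n)) -> filt t (\bigcup_(n in I) F n).
Proof. exact: (@bigcup_measurable _ (Ft t)). Qed.

Lemma filt_eqb t (b : T -> bool) c : filt t [set w | b w] -> filt t [set w | b w = c].
Proof.
case: c => // hb; rewrite (_ : [set w | b w = false] = ~` [set w | b w]).
  exact: filtC.
by apply/seteqP; split => w /=; case: (b w).
Qed.

Lemma filt_measurable_fun t f : filt t `<=` measurable ->
  filt_measurable p alpha lambda tau t f -> measurable_fun setT f.
Proof. by move=> sub mf _ B mB; rewrite setTI; exact: sub (mf B mB). Qed.

Definition outcome (j : nat) (w : T) : bool * bool * bool :=
  (p j w <= alpha j w, p j w <= lambda j w, p j w <= tau j w).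

(* [history t w i] is the outcome of hypothesis [i.+1]; the fibres of [history t]
   are the atoms of F^t. *)
Definition history t w : {ffun 'I_t -> bool * bool * bool} :=
  [ffun i : 'I_t => outcome i.+1 w].

Definition atom t (s : {ffun 'I_t -> bool * bool * bool}) := history t @^-1` [set s].
Arguments atom : clear implicits.

Lemma history_outcome t j w w' : (1 <= j <= t)%N ->
  history t w = history t w' -> outcome j w = outcome j w'.
Proof.
move=> /andP[j1 jt] e; have jt' : (j.-1 < t)%N by rewrite prednK.
by have := congr1 (fun h : {ffun _ -> _} => h (Ordinal jt')) e; rewrite !ffunE /= prednK.
Qed.

Lemma filt_history t A w w' : filt t A -> history t w = history t w' -> A w -> A w'.
Proof.
suff : filt t `<=` [set A | forall v v', history t v = history t v' -> A v -> A v'].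
  by move=> sub /sub; apply.
apply: smallest_sub.
- split => //.
  + move=> B hB v v' e [_ nBv]; split => // Bv'.
    by apply: nBv; exact: hB (esym e) Bv'.
  + by move=> F hF v v' e [n _ Fnv]; exists n => //; exact: hF e Fnv.
- move=> B [j [jt HB]] v v' /(history_outcome jt) [e1 e2 e3].
  by case: HB => [|[|]] ->; rewrite /Rev /Cev /Sev /= ?e1 ?e2 ?e3.
Qed.

Lemma filt_measurable_history t f w w' :
  filt_measurable p alpha lambda tau t f -> history t w = history t w' -> f w = f w'.
Proof.
by move=> mf e; apply/esym; exact: (filt_history (mf _ (measurable_set1 (f w))) e).
Qed.

Lemma filt_atom t s : filt t (atom t s).
Proof.
have -> : atom t s = \bigcap_(i in [set: 'I_t])
    ([set w | (p i.+1 w <= alpha i.+1 w) = (s i).1.1] `&`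
     [set w | (p i.+1 w <= lambda i.+1 w) = (s i).1.2] `&`
     [set w | (p i.+1 w <= tau i.+1 w) = (s i).2]).
  apply/seteqP; split => [w /= <- i _|w /= hw]; first by rewrite ffunE.
  apply/ffunP => i; rewrite ffunE /outcome.
  by case: (hw i I) => -[-> ->] ->; case: (s i) => -[].
apply: (@fin_bigcap_measurable _ (Ft t)); first exact: finite_finset.
move=> i _; have it : (1 <= i.+1 <= t)%N by rewrite ltn_ord.
have gen A : A = Rev p alpha i.+1 \/ A = Cev p lambda i.+1 \/ A = Sev p tau i.+1 ->
    filt t A.
  by move=> hA; apply: sub_gen_smallest; exists i.+1.
by apply: filtI; [apply: filtI|]; apply: filt_eqb; apply: gen; auto.
Qed.

End Filtration.

Arguments atom {d T R} p alpha lambda tau t s.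

Section ADDIS.
Context {d : measure_display} {T : measurableType d} {R : realType}.
Variable P : probability T R.
Variables (p alpha lambda tau : nat -> T -> R) (H0 : pred nat) (Ts : T -> nat).

Local Notation filt := (filt p alpha lambda tau).
Local Notation Rev := (Rev p alpha).
Local Notation nrej := (nrej p alpha).
Local Notation nfalse_rej := (nfalse_rej p alpha H0).

Hypothesis mp : forall j, (1 <= j)%N -> measurable_fun setT (p j).
Hypothesis predictable : forall j, (1 <= j)%N ->
  [/\ filt_measurable p alpha lambda tau j.-1 (alpha j),
      filt_measurable p alpha lambda tau j.-1 (lambda j) &
      filt_measurable p alpha lambda tau j.-1 (tau j)].
Hypothesis cuc : cond_unif_conservative P p alpha lambda tau H0.
Hypothesis levels : forall j w, (1 <= j)%N ->
  [/\ 0 <= alpha j w, alpha j w <= lambda j w, lambda j w < tau j w & tau j w <= 1].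
Hypothesis stop : stopping_time p alpha lambda tau Ts.

Definition weight j w := alpha j w / (tau j w - lambda j w).

Definition window j := [set w | lambda j w < p j w <= tau j w].

Lemma filt_sub_measurable t : filt t `<=` measurable.
Proof.
elim: t => [|t IH]; apply: smallest_sub; try exact: sigma_algebra_measurable.
  by move=> A [j [/andP[j1 j0]]]; move: (leq_trans j1 j0).
move=> A [j [/andP[j1 jt] HA]].
have jt' : (j.-1 <= t)%N by rewrite -ltnS prednK.
have mF := filt_measurable_fun (subset_trans (filt_sub jt') IH).
case: (predictable j1) => /mF ma /mF ml /mF mt.
by case: HA => [|[|]] ->; apply: measurable_ler => //; exact: mp.
Qed.

Let measurable_filt t A (hA : filt t A) : measurable A := filt_sub_measurable hA.

Lemma predictable_measurable j : (1 <= j)%N ->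
  [/\ measurable_fun setT (alpha j), measurable_fun setT (lambda j) &
      measurable_fun setT (tau j)].
Proof.
move=> j1; have mF := filt_measurable_fun (filt_sub_measurable (t := j.-1)).
by case: (predictable j1) => /mF ? /mF ? /mF.
Qed.

Lemma measurable_Rev j : (1 <= j)%N -> measurable (Rev j).
Proof.
move=> j1; case: (predictable_measurable j1) => ma _ _.
exact: measurable_ler (mp j1) ma.
Qed.

Lemma measurable_window j : (1 <= j)%N -> measurable (window j).
Proof.
move=> j1; case: (predictable_measurable j1) => _ ml mt.
exact: measurable_ltr_ler (mp j1) mt.
Qed.

Lemma weight_ge0 j w : (1 <= j)%N -> 0 <= weight j w.
Proof.
by move=> j1; case: (levels w j1) => a0 _ lt _; rewrite divr_ge0 // subr_ge0 ltW.
Qed.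

Lemma measurable_weight j : (1 <= j)%N -> measurable_fun setT (weight j).
Proof.
move=> j1; case: (predictable_measurable j1) => ma ml mt.
rewrite (_ : weight j = alpha j \* (fun w => (tau j w - lambda j w) `^ (-1))).
  apply: measurable_funM => //.
  exact: measurableT_comp (measurable_powR _) (measurable_funB _ _).
apply/funext => w; rewrite /weight /= powR_inv1 // subr_ge0 ltW //.
by case: (levels w j1).
Qed.

Lemma measurable_weight_window j : (1 <= j)%N ->
  measurable_fun setT (fun w => weight j w * \1_(window j) w).
Proof.
move=> j1; apply: measurable_funM; first exact: measurable_weight.
exact: measurable_indic (measurable_window j1).
Qed.

(** * Conditional uniform conservativeness on F^{j-1}-events *)

Definition pr (A : set T) : R := fine (P A).

Lemma prE A : measurable A -> P A = (pr A)%:E.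
Proof. by move=> mA; rewrite /pr fineK // fin_num_measure. Qed.

Lemma pr_ge0 A : 0 <= pr A.
Proof. exact/fine_ge0/measure_ge0. Qed.

Lemma le_pr A B : measurable A -> measurable B -> A `<=` B -> pr A <= pr B.
Proof. by move=> mA mB AB; rewrite -lee_fin -!prE // le_measure // inE. Qed.

Lemma measurable_p_le j c D : (1 <= j)%N -> measurable D ->
  measurable ([set w | p j w <= c] `&` D).
Proof.
by move=> j1 mD; apply: measurableI => //; exact: measurable_ler (mp j1) (measurable_cst c).
Qed.

Lemma measurable_p_between j l t D : (1 <= j)%N -> measurable D ->
  measurable ([set w | l < p j w <= t] `&` D).
Proof.
move=> j1 mD; apply: measurableI => //.
by apply: measurable_ltr_ler; [exact: measurable_cst|exact: mp|exact: measurable_cst].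
Qed.

Lemma conservative_scale j D y s : (1 <= j)%N -> H0 j -> filt j.-1 D ->
  0 < y < 1 -> 0 < s < 1 ->
  pr ([set w | p j w <= y * s] `&` D) <= y * pr ([set w | p j w <= s] `&` D).
Proof.
move=> j1 hj hD hy hs; have mD := measurable_filt hD.
have := cuc j1 hj hy hs hD; case/andP: hs => s0 s1; case/andP: hy => y0 y1.
rewrite (_ : [set w | p j w / s <= y] `&` _ = [set w | p j w <= y * s] `&` D).
  by move=> h; rewrite -lee_fin EFinM -!prE //; exact: measurable_p_le.
apply/seteqP; split => w /=; first by move=> [h [_ Dw]]; rewrite -ler_pdivrMr.
move=> [h Dw]; rewrite ler_pdivrMr //; split => //; split => //.
by apply: le_trans h _; rewrite ler_piMl //; lra.
Qed.

(* Conservativeness is only assumed at levels in (0,1); x itself is reached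
   from above through the levels y (s r) with r = (x + y) / (2 y) < 1. *)
Lemma conservative_scale_le j D x s : (1 <= j)%N -> H0 j -> filt j.-1 D ->
  0 <= x < 1 -> 0 < s <= 1 ->
  pr ([set w | p j w <= x * s] `&` D) <= x * pr ([set w | p j w <= s] `&` D).
Proof.
move=> j1 hj hD /andP[x0 x1] /andP[s0 s1]; have mD := measurable_filt hD.
have mS c := measurable_p_le c j1 mD.
apply: ler_mul_of_forall_gt => // [|y /andP[xy y1]]; first exact: pr_ge0.
have y0 : 0 < y by lra.
pose r := (x + y) / (2 * y).
have r0 : 0 < r by rewrite divr_gt0 //; lra.
have r1 : r < 1 by rewrite ltr_pdivrMr; lra.
have yr : y * r = (x + y) / 2 by rewrite /r; field; exact: lt0r_neq0.
have hy : 0 < y < 1 by rewrite y0 y1.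
have hsr : 0 < s * r < 1 by apply/andP; split; nra.
apply: (@le_trans _ _ (pr ([set w | p j w <= y * (s * r)] `&` D))).
  apply: le_pr => // w /= [h Dw]; split => //.
  by apply: le_trans h _; rewrite mulrCA yr; nra.
apply: le_trans (conservative_scale j1 hj hD hy hsr) _; apply: ler_wpM2l; first lra.
by apply: le_pr => // w /= [h Dw]; split => //; nra.
Qed.

Lemma conservative_window j D a l t : (1 <= j)%N -> H0 j -> filt j.-1 D ->
  0 <= a -> a <= l -> l < t -> t <= 1 ->
  pr ([set w | p j w <= a] `&` D) * (t - l) <= a * pr ([set w | l < p j w <= t] `&` D).
Proof.
move=> j1 hj hD a0 al lt t1; have mD := measurable_filt hD.
have t0 : 0 < t by lra.
have scale c : 0 <= c < t ->
    t * pr ([set w | p j w <= c] `&` D) <= c * pr ([set w | p j w <= t] `&` D).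
  move=> /andP[c0 ct]; have := conservative_scale_le (x := c / t) (s := t) j1 hj hD.
  rewrite divfK ?gt_eqF // => h; rewrite mulrC -ler_pdivlMr // mulrAC.
  apply: h; last by rewrite t0.
  by apply/andP; split; [rewrite divr_ge0 // ltW|rewrite ltr_pdivrMr // mul1r].
have split_t : pr ([set w | p j w <= t] `&` D) =
    pr ([set w | p j w <= l] `&` D) + pr ([set w | l < p j w <= t] `&` D).
  have mL := measurable_p_le l j1 mD; have mT := measurable_p_le t j1 mD.
  have mW := measurable_p_between l t j1 mD.
  apply: EFin_inj; rewrite EFinD -!prE // -measureU //.
    congr (P _); apply/seteqP; split => w /=.
      move=> [h Dw]; have [pl|lp] := lerP (p j w) l; first by left.
      by right; split => //; rewrite lp h.
    by case=> -[h Dw]; split => //; [lra|case/andP: h].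
  by apply/seteqP; split => // w /= [[h _] [/andP[h' _] _]]; lra.
have /scale ha : 0 <= a < t by rewrite a0 (le_lt_trans al lt).
have /scale hl : 0 <= l < t by rewrite (le_trans a0 al) lt.
rewrite split_t in ha hl.
have tl : 0 <= t - l by lra.
(* With A, L, E the probabilities of p <= a, p <= l, l < p <= t on D:
   t A (t - l) <= a (L + E) (t - l) and a t L <= a l (L + E) give A (t - l) <= a E. *)
have := ler_wpM2r tl ha; have := ler_wpM2l a0 hl.
have := pr_ge0 ([set w | l < p j w <= t] `&` D); rewrite -(ler_pM2l t0); nra.
Qed.

Lemma integral_weight_window_const j D w0 : (1 <= j)%N -> measurable D ->
  (forall w, D w ->
     [/\ alpha j w = alpha j w0, lambda j w = lambda j w0 & tau j w = tau j w0]) ->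
  (\int[P]_w (\1_D w * (weight j w * \1_(window j) w))%:E =
   (weight j w0)%:E * P ([set w | (lambda j w0 < p j w <= tau j w0)%R] `&` D))%E.
Proof.
move=> j1 mD const; set W := [set w | _ < p j w <= _] `&` D.
have mW : measurable W := measurable_p_between _ _ j1 mD.
have mIW : measurable_fun setT (fun w => (\1_W w : R)%:E).
  by apply/measurable_EFinP; exact: measurable_indic.
rewrite -(setIT W) -integral_indic // -ge0_integralZl_EFin //; last exact: weight_ge0.
apply: eq_integral => w _; rewrite -EFinM; congr (_%:E).
have [Dw|nDw] := pselect (D w); last first.
  have nWw : ~ W w by move=> [_ /nDw].
  by rewrite indicE (memNset nDw) mul0r indicE (memNset nWw) mulr0.
case: (const w Dw) => ea el et.
rewrite indicE (mem_set Dw) mul1r /weight ea el et; congr (_ * _).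
rewrite !indicE; suff -> : (w \in window j) = (w \in W) by [].
apply/idP/idP => /set_mem h; apply/mem_set.
  by split => //; rewrite /= -el -et.
by case: h; rewrite /window /= el et.
Qed.

Lemma conservative_rejection_const j D w0 : (1 <= j)%N -> H0 j -> filt j.-1 D ->
  (forall w, D w ->
     [/\ alpha j w = alpha j w0, lambda j w = lambda j w0 & tau j w = tau j w0]) ->
  (P (D `&` Rev j) <= \int[P]_w (\1_D w * (weight j w * \1_(window j) w))%:E)%E.
Proof.
move=> j1 hj hD const; have mD := measurable_filt hD.
rewrite (integral_weight_window_const j1 mD const).
case: (levels w0 j1) => a0 al lt t1.
rewrite (_ : D `&` Rev j = [set w | p j w <= alpha j w0] `&` D); last first.
  apply/seteqP; split => w /= [h1 h2].
    by case: (const w h1) => ea _ _; split; rewrite // -ea.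
  by case: (const w h2) => ea _ _; split; rewrite // /Rev /= ea.
rewrite (prE (measurable_p_le _ j1 mD)).
rewrite [X in (_ * X)%E](prE (measurable_p_between _ _ j1 mD)) -EFinM lee_fin.
by rewrite /weight mulrAC ler_pdivlMr ?subr_gt0 // conservative_window.
Qed.

(* On an atom of F^{j-1} the levels alpha_j, lambda_j and tau_j are constant. *)
Lemma conservative_rejection j B : (1 <= j)%N -> H0 j -> filt j.-1 B ->
  (P (B `&` Rev j) <= \int[P]_w (\1_B w * (weight j w * \1_(window j) w))%:E)%E.
Proof.
move=> j1 hj hB; have mB := measurable_filt hB.
have mBR := measurableI _ _ mB (measurable_Rev j1).
have mA s : measurable (atom p alpha lambda tau j.-1 s) := measurable_filt (filt_atom s).
have mL : measurable_fun setT (fun w => (\1_(B `&` Rev j) w : R)%:E).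
  by apply/measurable_EFinP; exact: measurable_indic.
have nnL w : (0 <= (\1_(B `&` Rev j) w : R)%:E)%E by rewrite lee_fin indicE.
have mW : measurable_fun setT (fun w => (\1_B w * (weight j w * \1_(window j) w))%:E).
  apply/measurable_EFinP; apply: measurable_funM; first exact: measurable_indic.
  exact: measurable_weight_window.
have nnW w : (0 <= (\1_B w * (weight j w * \1_(window j) w))%:E)%E.
  by rewrite lee_fin mulr_ge0 ?indicE // mulr_ge0 ?weight_ge0 ?indicE.
rewrite -(setIT (B `&` Rev j)) -integral_indic //.
rewrite (ge0_integral_fibers P mA mL nnL) (ge0_integral_fibers P mA mW nnW).
apply: lee_sum => s _; set A := atom p alpha lambda tau j.-1 s.
have hBA : filt j.-1 (B `&` A) := filtI hB (filt_atom s).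
rewrite (eq_integral (fun w => (\1_((B `&` A) `&` Rev j) w)%:E)); last first.
  by move=> w _; rewrite -EFinM !indicI /= mulrAC.
have mBAR := measurableI _ _ (measurable_filt hBA) (measurable_Rev j1).
rewrite integral_indic // setIT.
rewrite (eq_integral
    (fun w => (\1_(B `&` A) w * (weight j w * \1_(window j) w))%:E)); last first.
  by move=> w _; rewrite -EFinM indicI /= mulrAC.
have [[w0 [_ Aw0]]|/forallNP BA0] := pselect (exists w, (B `&` A) w); last first.
  rewrite (_ : B `&` A = set0) ?set0I ?measure0; last first.
    by apply/seteqP; split => // w /BA0.
  by apply: integral_ge0 => w _; rewrite lee_fin indicE in_set0 mul0r.
apply: (conservative_rejection_const (w0 := w0)) => // w [_ Aw].
have e : history p alpha lambda tau j.-1 w = history p alpha lambda tau j.-1 w0.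
  by rewrite Aw Aw0.
by case: (predictable j1) => ea el et; split; exact: filt_measurable_history e.
Qed.

(** * Summation up to the stopping time *)

Lemma measurable_stop n : measurable [set w | Ts w = n].
Proof. exact: measurable_filt (@stop n). Qed.

Definition tested j := [set w | (j <= Ts w)%N].

Lemma filt_tested j : (1 <= j)%N -> filt j.-1 (tested j).
Proof.
move=> j1; rewrite (_ : tested j = ~` \bigcup_(n in [set n | (n < j)%N]) [set w | Ts w = n]).
  apply: filtC; apply: filt_bigcup => n /= nj.
  by apply: filt_sub (@stop n); rewrite -ltnS prednK.
apply/seteqP; split => w; rewrite /tested /=.
  by move=> jT [n /= nj Tn]; move: nj; rewrite -Tn ltnNge jT.
by move=> h; rewrite leqNgt; apply/negP => Tj; apply: h; exists (Ts w).
Qed.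

Definition fdp_num t w := \sum_(1 <= j < t.+1) weight j w * \1_(window j) w.

Lemma FDP_ADDISE t w :
  FDP_ADDIS p alpha lambda tau t w = fdp_num t w / Num.max (nrej t w)%:R 1.
Proof.
by congr (_ / _); apply: eq_bigr => j _; rewrite /window indic_bool /weight mulrAC.
Qed.

Lemma nrej_le t w : (nrej t w <= t)%N.
Proof.
apply: (@leq_trans (\sum_(1 <= j < t.+1) 1)); first by apply: leq_sum => j _; exact: leq_b1.
by rewrite sum_nat_const_nat muln1 subn1.
Qed.

Lemma measurable_nrej t : measurable_fun setT (fun w => (nrej t w)%:R : R).
Proof.
rewrite (_ : (fun w => _) = fun w => \sum_(1 <= j < t.+1) \1_(Rev j) w).
  by apply: measurable_sum_from1 => j j1; exact: measurable_indic (measurable_Rev j1).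
by apply/funext => w; rewrite /nrej natr_sum; apply: eq_bigr => j _; rewrite /Rev indic_bool.
Qed.

(* Index 0 carries no hypothesis. *)
Definition null_rej_term j w : \bar R :=
  if (0 < j)%N && H0 j then (\1_(tested j `&` Rev j) w)%:E else 0.

Definition fdp_term j w : \bar R :=
  if (0 < j)%N then (\1_(tested j) w * (weight j w * \1_(window j) w))%:E else 0.

Lemma null_rej_term_ge0 j w : (0 <= null_rej_term j w)%E.
Proof. by rewrite /null_rej_term; case: ifP => // _; rewrite lee_fin indicE. Qed.

Lemma fdp_term_ge0 j w : (0 <= fdp_term j w)%E.
Proof.
rewrite /fdp_term; case: ifP => // j1.
by rewrite lee_fin mulr_ge0 ?indicE // mulr_ge0 ?weight_ge0 ?indicE.
Qed.

Lemma measurable_null_rej_term j : measurable_fun setT (null_rej_term j).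
Proof.
rewrite /null_rej_term; case: (boolP ((0 < j)%N && H0 j)) => [/andP[j1 _]|_] /=;
  last exact: measurable_cst.
apply/measurable_EFinP; apply: measurable_indic.
exact: measurableI (measurable_filt (filt_tested j1)) (measurable_Rev j1).
Qed.

Lemma measurable_fdp_term j : measurable_fun setT (fdp_term j).
Proof.
rewrite /fdp_term; case: (boolP (0 < j)%N) => j1 /=; last exact: measurable_cst.
apply/measurable_EFinP; apply: measurable_funM; last exact: measurable_weight_window.
exact: measurable_indic (measurable_filt (filt_tested j1)).
Qed.

Lemma integral_null_rej_term_le j :
  (\int[P]_w null_rej_term j w <= \int[P]_w fdp_term j w)%E.
Proof.
rewrite /null_rej_term; case: (boolP ((0 < j)%N && H0 j)) => [/andP[j1 hj]|_] /=.
  have hT := filt_tested j1.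
  have mTR := measurableI _ _ (measurable_filt hT) (measurable_Rev j1).
  have := conservative_rejection j1 hj hT.
  by rewrite -(setIT (tested j `&` Rev j)) -integral_indic // /fdp_term j1 setIT.
by rewrite integral0; apply: integral_ge0 => w _; exact: fdp_term_ge0.
Qed.

Lemma nneseries_null_rej_term w :
  (\sum_(j <oo) null_rej_term j w = ((nfalse_rej (Ts w) w)%:R)%:E)%E.
Proof.
rewrite (nneseries_sum_finite (N := (Ts w).+1)); last 2 first.
- by move=> k; exact: null_rej_term_ge0.
- move=> k Tk; rewrite /null_rej_term; case: ifP => // _.
  by rewrite indicE memNset // => -[/= kT _]; move: Tk; rewrite ltnNge kT.
rewrite big_ltn // add0e /nfalse_rej natr_sum -sumEFin [RHS]big_mkcond /=.
apply: eq_big_nat => k /andP[k1 kT]; rewrite /null_rej_term k1 /=; case: (H0 k) => //.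
by rewrite indicI /= /tested indic_bool -ltnS kT mul1r /Rev indic_bool.
Qed.

Lemma nneseries_fdp_term w : (\sum_(j <oo) fdp_term j w = (fdp_num (Ts w) w)%:E)%E.
Proof.
rewrite (nneseries_sum_finite (N := (Ts w).+1)); last 2 first.
- by move=> k; exact: fdp_term_ge0.
- move=> k Tk; rewrite /fdp_term; case: ifP => // _.
  by rewrite /tested indic_bool leqNgt Tk mul0r.
rewrite big_ltn // add0e /fdp_num -sumEFin; apply: eq_big_nat => k /andP[k1 kT].
by rewrite /fdp_term k1 /tested indic_bool -ltnS kT mul1r.
Qed.

Lemma measurable_stopped_max_rej :
  measurable_fun setT (fun w => (Num.max (nrej (Ts w) w)%:R 1 : R)%:E).
Proof.
apply: (measurable_fun_stopped (F := fun n w => (Num.max (nrej n w)%:R 1 : R)%:E)).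
  exact: measurable_stop.
move=> n; apply/measurable_EFinP.
exact: measurable_maxr (measurable_nrej n) (measurable_cst _).
Qed.

Lemma measurable_stopped_fdp_num : measurable_fun setT (fun w => (fdp_num (Ts w) w)%:E).
Proof.
apply: (measurable_fun_stopped (F := fun n w => (fdp_num n w)%:E)) => [|n].
  exact: measurable_stop.
apply/measurable_EFinP; apply: measurable_sum_from1 => j j1.
exact: measurable_weight_window.
Qed.

Lemma expect_false_rej_le (a : R) : 0 <= a ->
  (forall t w, FDP_ADDIS p alpha lambda tau t w <= a) ->
  (\int[P]_w ((nfalse_rej (Ts w) w)%:R)%:E <=
     a%:E * \int[P]_w (Num.max (nrej (Ts w) w)%:R 1)%:E)%E.
Proof.
move=> a0 fdp_le.
under eq_integral do rewrite -nneseries_null_rej_term.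
rewrite (integral_nneseries P measurableT measurable_null_rej_term); last first.
  by move=> j w _; exact: null_rej_term_ge0.
apply: le_trans (_ : \sum_(j <oo) \int[P]_w fdp_term j w <= _)%E.
  apply: lee_nneseries => [j _ _|j _]; last exact: integral_null_rej_term_le.
  by apply: integral_ge0 => w _; exact: null_rej_term_ge0.
rewrite -(integral_nneseries P measurableT measurable_fdp_term); last first.
  by move=> j w _; exact: fdp_term_ge0.
under eq_integral do rewrite nneseries_fdp_term.
rewrite -ge0_integralZl_EFin //; last exact: measurable_stopped_max_rej.
apply: ge0_le_integral => //.
- move=> w _; rewrite lee_fin /fdp_num big_nat_cond sumr_ge0 // => j /andP[/andP[j1 _] _].
  by rewrite mulr_ge0 ?weight_ge0 ?indicE.
- exact: measurable_stopped_fdp_num.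
- apply/measurable_EFinP; apply: measurable_funM; first exact: measurable_cst.
  by apply/measurable_EFinP; exact: measurable_stopped_max_rej.
- move=> w _; rewrite lee_fin -ler_pdivrMr; last by rewrite lt_max ltr01 orbT.
  by rewrite -FDP_ADDISE.
Qed.

Lemma expect_max_rej_ge1 : (1 <= \int[P]_w (Num.max (nrej (Ts w) w)%:R 1)%:E)%E.
Proof.
rewrite -[X in (X <= _)%E](probability_setT P) -[X in (X <= _)%E]mul1e -integral_cst //.
apply: ge0_le_integral => //; first exact: measurable_stopped_max_rej.
by move=> w _; rewrite lee_fin le_max lexx orbT.
Qed.

Lemma expect_max_rej_le :
  (\int[P]_w (Num.max (nrej (Ts w) w)%:R 1)%:E <= \int[P]_w ((Ts w)%:R)%:E + 1)%E.
Proof.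
have mT : measurable_fun setT (fun w => ((Ts w)%:R : R)%:E).
  apply: (measurable_fun_stopped (F := fun n (_ : T) => (n%:R : R)%:E)) => [|n].
    exact: measurable_stop.
  exact: measurable_cst.
rewrite -[X in (_ + X)%E](probability_setT P) -[X in (_ + X)%E]mul1e -integral_cst //.
rewrite -ge0_integralD //; apply: ge0_le_integral => //.
- exact: measurable_stopped_max_rej.
- exact: emeasurable_funD.
- move=> w _; rewrite /= -EFinD lee_fin ge_max natr1 ler_nat ler1n andbT.
  exact/leqW/nrej_le.
Qed.

End ADDIS.

Theorem theorem2 (d : measure_display) (T : measurableType d) (R : realType)
  (P : probability T R) (p alpha lambda tau : nat -> T -> R) (H0 : pred nat)
  (a eps : R) (Ts : T -> nat) :
  0 < a < 1 ->
  (* p-values *)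
  (forall j, (1 <= j)%N -> measurable_fun setT (p j)) ->
  (forall j w, (1 <= j)%N -> 0 <= p j w <= 1) ->
  (* test levels in [0,1], predictable *)
  (forall j w, (1 <= j)%N ->
     [/\ 0 <= alpha j w <= 1, 0 <= lambda j w <= 1 & 0 <= tau j w <= 1]) ->
  (forall j, (1 <= j)%N ->
     [/\ filt_measurable p alpha lambda tau j.-1 (alpha j),
         filt_measurable p alpha lambda tau j.-1 (lambda j) &
         filt_measurable p alpha lambda tau j.-1 (tau j)]) ->
  cond_unif_conservative P p alpha lambda tau H0 ->
  (forall j w, (1 <= j)%N -> tau j w > lambda j w /\ lambda j w >= alpha j w) ->
  0 < eps ->
  (forall j w, (1 <= j)%N -> tau j w - lambda j w > eps) ->
  stopping_time p alpha lambda tau Ts ->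
  (\int[P]_w ((Ts w)%:R)%:E < +oo)%E ->
  (forall t w, FDP_ADDIS p alpha lambda tau t w <= a) ->
  let EV := (\int[P]_w ((nfalse_rej p alpha H0 (Ts w) w)%:R)%:E)%E in
  let ER := (\int[P]_w ((Num.max (nrej p alpha (Ts w) w)%:R 1))%:E)%E in
  [/\ (EV < +oo)%E, (ER < +oo)%E & fine EV / fine ER <= a].
Proof.
move=> /andP[a0 _] mp _ ranges predictable cuc order _ _ stop ETs fdp_le EV ER.
have levels j w : (1 <= j)%N ->
    [/\ 0 <= alpha j w, alpha j w <= lambda j w, lambda j w < tau j w & tau j w <= 1].
  by move=> j1; case: (ranges j w j1) => /andP[? _] _ /andP[_ ?]; case: (order j w j1).
have EV_le : (EV <= a%:E * ER)%E :=
  expect_false_rej_le mp predictable cuc levels stop (ltW a0) fdp_le.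
have ER_ge1 : (1 <= ER)%E := expect_max_rej_ge1 P mp predictable stop.
have ER_fin : (ER < +oo)%E.
  apply: le_lt_trans (expect_max_rej_le P mp predictable stop) _.
  exact: lte_add_pinfty ETs (ltry 1).
have ER_num : ER \is a fin_num by rewrite ge0_fin_numE // (le_trans _ ER_ge1).
have EV_ge0 : (0 <= EV)%E by apply: integral_ge0 => w _; rewrite lee_fin.
have EV_fin : (EV < +oo)%E.
  by apply: le_lt_trans EV_le _; apply: lte_mul_pinfty; rewrite ?lee_fin ?ltW.
have EV_num : EV \is a fin_num by rewrite ge0_fin_numE.
split => //.
rewrite ler_pdivrMr; last by rewrite -lte_fin fineK // (lt_le_trans _ ER_ge1).
by rewrite -lee_fin EFinM !fineK.
Qed.
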